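(* Let $\alpha_L,\alpha_R,\mu_L,\mu_R,\gamma_{RL},\gamma_{LR},\delta_L,\delta_R,\rho>0$. For every $(L_0,R_0,A_0)\in\mathcal T=\{(L,R,A)\in\mathbb{R}^3: L,R,A\ge0,\ L+R+A\le1\}$, the solution of \[ \begin{aligned} \dot L&=\alpha_L L C+\gamma_{RL} R C+\delta_L A L-\mu_L L,\\ \dot R&=\alpha_R R C+\gamma_{LR} L C+\delta_R A R-\mu_R R,\\ \dot A&=-\delta_L A L-\delta_R A R-\rho A, \end{aligned}\qquad C=1-L-R-A, \] with initial value $(L_0,R_0,A_0)$ remains in $\mathcal T$ for all $t\ge0$. *)

From Stdlib Require Import Reals.
From Coquelicot Require Import Coquelicot.
Open Scope R_scope.

Definition in_T (l r a : R) : Prop :=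
  0 <= l /\ 0 <= r /\ 0 <= a /\ l + r + a <= 1.

Definition Cfree (l r a : R) : R := 1 - l - r - a.

Definition fL (aL gRL dL muL : R) (l r a : R) : R :=
  aL * l * Cfree l r a + gRL * r * Cfree l r a + dL * a * l - muL * l.
Definition fR (aR gLR dR muR : R) (l r a : R) : R :=
  aR * r * Cfree l r a + gLR * l * Cfree l r a + dR * a * r - muR * r.
Definition fA (dL dR rho : R) (l r a : R) : R :=
  - dL * a * l - dR * a * r - rho * a.

(* All four coordinates L, R, A and C = 1 - L - R - A start nonnegative, and the
   vector field is quasi-positive: on a bounded time window, if every coordinate is
   at least -eta and one of them equals -eta, then the derivative of that one is at
   least -K eta.  Adding eps * exp ((K + 1) t) to every coordinate makes this a
   strict barrier: at the first time a perturbed coordinate reaches 0 its derivative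
   would be positive although it was positive just before, which is impossible.
   Real induction makes "first time" precise, and letting eps go to 0 shows that
   the four coordinates stay nonnegative, i.e. the solution stays in T. *)

From Stdlib Require Import Reals Lra Lia Classical.
From Coquelicot Require Import Coquelicot.
Open Scope R_scope.

Lemma is_derive_continuous (f : R -> R) (x l : R) : is_derive f x l -> continuous f x.
Proof.
  intros Hf.
  exact (ex_derive_continuous (K := R_AbsRing) (V := R_NormedModule) f x (ex_intro _ l Hf)).
Qed.

Lemma continuous_within (D : R -> Prop) (f : R -> R) (s : R) :
  continuous f s -> filterlim f (within D (locally s)) (locally (f s)).
Proof. intros Hf; exact (filterlim_filter_le_1 f (filter_le_within D) Hf). Qed.

Lemma filterlim_Rminus {T : Type} {F : (T -> Prop) -> Prop} {FF : Filter F}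
  (f g : T -> R) (x y : R) :
  filterlim f F (locally x) -> filterlim g F (locally y) ->
  filterlim (fun t => f t - g t) F (locally (x - y)).
Proof.
  intros Hf Hg.
  exact (filterlim_comp_2 f (fun t => - g t) Rplus Hf
           (filterlim_comp _ _ _ g opp _ _ _ Hg (filterlim_opp (K := R_AbsRing) y))
           (filterlim_plus (K := R_AbsRing) x (- y))).
Qed.

Lemma filter_forall_lt {T : Type} {F : (T -> Prop) -> Prop} {FF : Filter F}
  (n : nat) (P : nat -> T -> Prop) :
  (forall i, (i < n)%nat -> F (P i)) ->
  F (fun x => forall i, (i < n)%nat -> P i x).
Proof.
  induction n as [|n IH]; intros HP.
  - apply filter_forall; intros x i Hi; lia.
  - apply (filter_imp (fun x => (forall i, (i < n)%nat -> P i x) /\ P n x)).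
    + intros x [Hlt Hn] i Hi.
      destruct (Nat.eq_dec i n) as [->|Hne]; [exact Hn | apply Hlt; lia].
    + apply filter_and; [apply IH; intros i Hi | ]; apply HP; lia.
Qed.

Lemma filterlim_gt {T : Type} {F : (T -> Prop) -> Prop} {FF : Filter F}
  (f : T -> R) (l c : R) :
  filterlim f F (locally l) -> c < l -> F (fun x => c < f x).
Proof. intros Hf Hcl; exact (Hf (fun y => c < y) (open_gt c l Hcl)). Qed.

Lemma filterlim_ge {T : Type} {F : (T -> Prop) -> Prop} {FF : ProperFilter F}
  (f : T -> R) (l c : R) :
  filterlim f F (locally l) -> F (fun x => c <= f x) -> c <= l.
Proof.
  intros Hf Hc.
  destruct (Rle_or_lt c l) as [|Hlc]; [assumption | exfalso].
  pose proof (Hf (fun y => y < c) (open_lt c l Hlc)) as Hlt.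
  destruct (filter_ex _ (filter_and _ _ Hc Hlt)) as [x Hx].
  lra.
Qed.

Lemma at_left_between (s c : R) : c < s -> at_left s (fun t => c < t < s).
Proof.
  intros Hcs; unfold at_left, within.
  apply (filter_imp (fun t => c < t)); [intros t Hct Hts; split; assumption |].
  exact (open_gt c s Hcs).
Qed.

Lemma is_derive_lt_left (f : R -> R) (s l : R) :
  is_derive f s l -> 0 < l -> at_left s (fun t => f t < f s).
Proof.
  intros Hf Hl.
  apply is_derive_Reals in Hf.
  destruct (Hf l Hl) as [d Hd].
  exists d; intros t Hts Hlt; change R in t.
  specialize (Hd (t - s) ltac:(lra) Hts).
  replace (s + (t - s)) with t in Hd by ring.
  apply Rabs_def2 in Hd.
  assert (Hq : 0 < (f t - f s) / (t - s)) by lra.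
  assert (Hdiff : f t - f s = (f t - f s) / (t - s) * (t - s)) by (field; lra).
  nra.
Qed.

Lemma real_induction (Q : R -> Prop) (a b : R) :
  a <= b ->
  (forall s, a <= s <= b -> (forall t, a <= t < s -> Q t) -> Q s) ->
  (forall s, a <= s < b -> Q s -> at_right s Q) ->
  forall t, a <= t <= b -> Q t.
Proof.
  intros Hab Hclosed Hopen.
  set (E x := a <= x <= b /\ forall t, a <= t < x -> Q t).
  destruct (completeness E) as [c [Hub Hleast]].
  - exists b; intros x Ex; apply Ex.
  - exists a; split; [lra | intros t Ht; lra].
  - assert (Hac : a <= c) by (apply Hub; split; [lra | intros t Ht; lra]).
    assert (Hcb : c <= b) by (apply Hleast; intros x Ex; apply Ex).
    assert (Hbelow : forall t, a <= t < c -> Q t).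
    { intros t Ht; apply NNPP; intros HQ.
      enough (c <= t) by lra.
      apply Hleast; intros x [_ Hx].
      destruct (Rle_or_lt x t) as [|Htx]; [assumption | exfalso; apply HQ, Hx; lra]. }
    assert (Qc : Q c) by (apply Hclosed; [lra | exact Hbelow]).
    assert (Hc : c = b).
    { destruct (Req_dec c b) as [|Hne]; [assumption | exfalso].
      destruct (Hopen c ltac:(lra) Qc) as [d Hd].
      set (x := Rmin (c + d / 2) b).
      assert (Hcx : c < x) by (apply Rmin_glb_lt; pose proof (cond_pos d); lra).
      assert (Ex : E x).
      { split; [split; [lra | apply Rmin_r] |].
        intros t Ht.
        destruct (Rlt_or_le t c) as [|Htc]; [apply Hbelow; lra |].
        destruct (Req_dec t c) as [->|Hne']; [exact Qc |].
        apply Hd; [| lra].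
        change (Rabs (t - c) < d).
        assert (Hxd : x <= c + d / 2) by apply Rmin_l.
        pose proof (cond_pos d); rewrite Rabs_right; lra. }
      pose proof (Hub x Ex); lra. }
    intros t Ht.
    destruct (Rlt_or_le t c) as [|Htc]; [apply Hbelow; lra |].
    replace t with c by lra; exact Qc.
Qed.

Lemma bounded_on_segment (f : R -> R) (t1 : R) :
  0 < t1 -> filterlim f (at_right 0) (locally (f 0)) ->
  (forall t, 0 < t <= t1 -> continuous f t) ->
  exists M, forall t, 0 <= t <= t1 -> Rabs (f t) <= M.
Proof.
  intros Ht1 Hright Hcont.
  destruct (proj1 (filterlim_locally f (f 0)) Hright (mkposreal 1 Rlt_0_1)) as [d Hd].
  set (a := Rmin (d / 2) t1).
  pose proof (cond_pos d) as Hd0.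
  assert (Ha : 0 < a) by (apply Rmin_pos; lra).
  assert (Had : a <= d / 2) by apply Rmin_l.
  assert (Hat1 : a <= t1) by apply Rmin_r.
  destruct (bounded_continuity f a t1) as [M HM].
  { intros t Ht; apply Hcont; lra. }
  exists (Rmax M (Rabs (f 0) + 1)); intros t Ht.
  destruct (Rle_or_lt a t) as [Hat|Hta].
  - apply Rle_trans with M; [left; exact (HM t (conj Hat (proj2 Ht))) | apply Rmax_l].
  - apply Rle_trans with (Rabs (f 0) + 1); [| apply Rmax_r].
    destruct (Req_dec t 0) as [->|Ht0]; [lra |].
    assert (Hnear : Rabs (f t - f 0) < 1).
    { apply Hd; [| lra]. change (Rabs (t - 0) < d). rewrite Rabs_right; lra. }
    pose proof (Rabs_triang_inv (f t) (f 0)); lra.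
Qed.

Lemma mult_lower_bound (x y eta B : R) :
  0 <= eta -> - eta <= x -> - eta <= y -> Rabs x <= B -> Rabs y <= B ->
  - (eta * B) <= x * y.
Proof.
  intros Heta Hx Hy HxB HyB.
  apply Rabs_le_between in HxB, HyB.
  destruct (Rle_or_lt 0 x); destruct (Rle_or_lt 0 y); nra.
Qed.

Section Invariance.

Variables (n : nat) (u du : nat -> R -> R) (K t1 : R).

Hypothesis u_derive :
  forall i t, (i < n)%nat -> 0 < t <= t1 -> is_derive (u i) t (du i t).
Hypothesis u_right_cont :
  forall i, (i < n)%nat -> filterlim (u i) (at_right 0) (locally (u i 0)).
Hypothesis u_nonneg0 : forall i, (i < n)%nat -> 0 <= u i 0.
Hypothesis u_quasi_positive :
  forall i t eta, (i < n)%nat -> 0 < t <= t1 -> 0 < eta ->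
  (forall j, (j < n)%nat -> - eta <= u j t) -> u i t = - eta ->
  - (K * eta) <= du i t.

Section Perturbation.

Variable eps : R.
Hypothesis eps_pos : 0 < eps.

Definition perturbed (i : nat) (t : R) : R := u i t + eps * exp ((K + 1) * t).

Lemma perturbed_derive i t : (i < n)%nat -> 0 < t <= t1 ->
  is_derive (perturbed i) t (du i t + (K + 1) * (eps * exp ((K + 1) * t))).
Proof.
  intros Hi Ht.
  apply (is_derive_plus (u i) (fun t => eps * exp ((K + 1) * t))).
  - exact (u_derive i t Hi Ht).
  - auto_derive; [exact I | ring].
Qed.

Lemma perturbed_right_cont i s : (i < n)%nat -> 0 <= s < t1 ->
  filterlim (perturbed i) (at_right s) (locally (perturbed i s)).
Proof.
  intros Hi Hs.
  destruct (Req_dec s 0) as [->|Hs0].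
  - assert (Hexp : continuous (fun t => eps * exp ((K + 1) * t)) 0)
      by (eapply is_derive_continuous; auto_derive; [exact I | reflexivity]).
    exact (filterlim_comp_2 _ _ Rplus (u_right_cont i Hi)
             (continuous_within _ _ _ Hexp) (filterlim_plus (K := R_AbsRing) _ _)).
  - apply continuous_within; eapply is_derive_continuous.
    apply perturbed_derive; [exact Hi | lra].
Qed.

Lemma perturbed_left_cont i s : (i < n)%nat -> 0 < s <= t1 ->
  filterlim (perturbed i) (at_left s) (locally (perturbed i s)).
Proof.
  intros Hi Hs.
  apply continuous_within; eapply is_derive_continuous.
  exact (perturbed_derive i s Hi Hs).
Qed.

Lemma perturbed_pos_closed s : 0 <= s <= t1 ->
  (forall t, 0 <= t < s -> forall i, (i < n)%nat -> 0 < perturbed i t) ->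
  forall i, (i < n)%nat -> 0 < perturbed i s.
Proof.
  intros Hs Hbefore i Hi.
  destruct (Req_dec s 0) as [->|Hs0].
  { unfold perturbed; rewrite Rmult_0_r, exp_0; specialize (u_nonneg0 i Hi); lra. }
  assert (Hleft : forall j, (j < n)%nat -> at_left s (fun t => 0 < perturbed j t)).
  { intros j Hj; apply (filter_imp (fun t => 0 < t < s)); [| apply at_left_between; lra].
    intros t Ht; apply Hbefore; [lra | exact Hj]. }
  assert (Hnonneg : forall j, (j < n)%nat -> 0 <= perturbed j s).
  { intros j Hj.
    apply (filterlim_ge (F := at_left s) _ _ _ (perturbed_left_cont j s Hj ltac:(lra))).
    apply (filter_imp _ _ (fun t => Rlt_le 0 _) (Hleft j Hj)). }
  destruct (Rle_lt_or_eq_dec _ _ (Hnonneg i Hi)) as [|Hzero]; [assumption | exfalso].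
  set (eta := eps * exp ((K + 1) * s)).
  assert (Heta : 0 < eta) by (apply Rmult_lt_0_compat; [lra | apply exp_pos]).
  assert (Hdu : - (K * eta) <= du i s).
  { apply u_quasi_positive; [exact Hi | lra | exact Heta | |].
    - intros j Hj; specialize (Hnonneg j Hj); unfold perturbed in Hnonneg; unfold eta; lra.
    - unfold perturbed in Hzero; unfold eta; lra. }
  assert (Hdecr : at_left s (fun t => perturbed i t < perturbed i s)).
  { apply (is_derive_lt_left _ _ _ (perturbed_derive i s Hi ltac:(lra))).
    fold eta; lra. }
  destruct (filter_ex _ (filter_and _ _ Hdecr (Hleft i Hi))) as [t Ht].
  lra.
Qed.

Lemma perturbed_pos_open s : 0 <= s < t1 ->
  (forall i, (i < n)%nat -> 0 < perturbed i s) ->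
  at_right s (fun t => forall i, (i < n)%nat -> 0 < perturbed i t).
Proof.
  intros Hs Hpos; apply filter_forall_lt; intros i Hi.
  exact (filterlim_gt _ _ _ (perturbed_right_cont i s Hi Hs) (Hpos i Hi)).
Qed.

Lemma perturbed_pos t : 0 <= t <= t1 -> forall i, (i < n)%nat -> 0 < perturbed i t.
Proof.
  intros Ht.
  apply (real_induction (fun t => forall i, (i < n)%nat -> 0 < perturbed i t) 0 t1).
  - lra.
  - exact perturbed_pos_closed.
  - exact perturbed_pos_open.
  - exact Ht.
Qed.

End Perturbation.

Theorem nonneg_invariant i t : (i < n)%nat -> 0 <= t <= t1 -> 0 <= u i t.
Proof.
  intros Hi Ht.
  apply Rle_plus_epsilon; intros e He.
  set (E := exp ((K + 1) * t)).
  assert (HE : 0 < E) by apply exp_pos.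
  pose proof (perturbed_pos (e / E) ltac:(apply Rdiv_lt_0_compat; lra) t Ht i Hi) as Hpos.
  unfold perturbed in Hpos; fold E in Hpos.
  replace (e / E * E) with e in Hpos by (field; lra).
  lra.
Qed.

End Invariance.

Definition coord (l r a : R) (i : nat) : R :=
  match i with 0%nat => l | 1%nat => r | 2%nat => a | _ => Cfree l r a end.

Lemma in_T_coord (l r a : R) :
  in_T l r a <-> forall i, (i < 4)%nat -> 0 <= coord l r a i.
Proof.
  unfold in_T; split.
  - intros (Hl & Hr & Ha & Hs) [|[|[|i]]] Hi; simpl; unfold Cfree; lra.
  - intros H.
    pose proof (H 0%nat ltac:(lia)); pose proof (H 1%nat ltac:(lia));
    pose proof (H 2%nat ltac:(lia)); pose proof (H 3%nat ltac:(lia)).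
    simpl in *; unfold Cfree in *; lra.
Qed.

Lemma coord_abs_le (l r a ML MR MA : R) :
  Rabs l <= ML -> Rabs r <= MR -> Rabs a <= MA ->
  forall i, Rabs (coord l r a i) <= 1 + ML + MR + MA.
Proof.
  intros Hl Hr Ha i.
  apply Rabs_le_between in Hl, Hr, Ha; apply Rabs_le_between.
  destruct i as [|[|[|i]]]; simpl; unfold Cfree; lra.
Qed.

Lemma coord_right_cont (L Rf A : R -> R) :
  filterlim L (at_right 0) (locally (L 0)) ->
  filterlim Rf (at_right 0) (locally (Rf 0)) ->
  filterlim A (at_right 0) (locally (A 0)) ->
  forall i, filterlim (fun t => coord (L t) (Rf t) (A t) i) (at_right 0)
              (locally (coord (L 0) (Rf 0) (A 0) i)).
Proof.
  intros cL cR cA [|[|[|i]]]; try assumption.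
  unfold coord, Cfree.
  repeat apply filterlim_Rminus; try assumption.
  apply (filterlim_const (F := at_right 0)).
Qed.

Section Model.

Variables aL aR muL muR gRL gLR dL dR rho : R.

Definition field (i : nat) (l r a : R) : R :=
  match i with
  | 0%nat => fL aL gRL dL muL l r a
  | 1%nat => fR aR gLR dR muR l r a
  | 2%nat => fA dL dR rho l r a
  | _ => - (fL aL gRL dL muL l r a + fR aR gLR dR muR l r a + fA dL dR rho l r a)
  end.

Lemma is_derive_coord (L Rf A : R -> R) (t : R) :
  is_derive L t (fL aL gRL dL muL (L t) (Rf t) (A t)) ->
  is_derive Rf t (fR aR gLR dR muR (L t) (Rf t) (A t)) ->
  is_derive A t (fA dL dR rho (L t) (Rf t) (A t)) ->
  forall i, is_derive (fun s => coord (L s) (Rf s) (A s) i) t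
              (field i (L t) (Rf t) (A t)).
Proof.
  intros dL' dR' dA' [|[|[|i]]]; try assumption.
  apply is_derive_Reals in dL', dR', dA'; apply is_derive_Reals.
  replace (field _ _ _ _) with (0 - fL aL gRL dL muL (L t) (Rf t) (A t)
      - fR aR gLR dR muR (L t) (Rf t) (A t) - fA dL dR rho (L t) (Rf t) (A t))
    by (simpl; ring).
  apply (derivable_pt_lim_minus (fun s => 1 - L s - Rf s) A); [| exact dA'].
  apply (derivable_pt_lim_minus (fun s => 1 - L s) Rf); [| exact dR'].
  apply (derivable_pt_lim_minus (fun _ => 1) L); [| exact dL'].
  apply derivable_pt_lim_const.
Qed.

Hypotheses (haL : 0 <= aL) (haR : 0 <= aR) (hmuL : 0 <= muL) (hmuR : 0 <= muR)
  (hgRL : 0 <= gRL) (hgLR : 0 <= gLR) (hdL : 0 <= dL) (hdR : 0 <= dR)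
  (hrho : 0 <= rho).

Definition rate_sum : R := aL + aR + muL + muR + gRL + gLR + dL + dR + rho.

Lemma field_quasi_positive (l r a B eta : R) (i : nat) :
  (i < 4)%nat -> 0 < eta ->
  (forall j, (j < 4)%nat -> - eta <= coord l r a j) ->
  (forall j, (j < 4)%nat -> Rabs (coord l r a j) <= B) ->
  coord l r a i = - eta -> - (rate_sum * (B + 1) * eta) <= field i l r a.
Proof.
  intros Hi Heta Hlow Hup Hci.
  pose proof (Hlow 0%nat ltac:(lia)) as lL; pose proof (Hlow 1%nat ltac:(lia)) as lR;
  pose proof (Hlow 2%nat ltac:(lia)) as lA; pose proof (Hlow 3%nat ltac:(lia)) as lC.
  pose proof (Hup 0%nat ltac:(lia)) as uL; pose proof (Hup 1%nat ltac:(lia)) as uR;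
  pose proof (Hup 2%nat ltac:(lia)) as uA; pose proof (Hup 3%nat ltac:(lia)) as uC.
  simpl in lL, lR, lA, lC, uL, uR, uA, uC.
  pose proof (mult_lower_bound r (Cfree l r a) eta B ltac:(lra) lR lC uR uC) as rC_ge.
  pose proof (mult_lower_bound l (Cfree l r a) eta B ltac:(lra) lL lC uL uC) as lC_ge.
  apply Rabs_le_between in uL, uR, uA, uC.
  assert (HeB : 0 <= eta * B) by nra.
  unfold rate_sum, field, fL, fR, fA.
  destruct i as [|[|[|i]]]; simpl in Hci; set (c := Cfree l r a) in *; rewrite Hci.
  - assert (0 <= aL * (eta * (B - c))) by (apply Rmult_le_pos; nra).
    assert (0 <= dL * (eta * (B - a))) by (apply Rmult_le_pos; nra).
    assert (0 <= gRL * (r * c + eta * B)) by (apply Rmult_le_pos; nra).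
    nra.
  - assert (0 <= aR * (eta * (B - c))) by (apply Rmult_le_pos; nra).
    assert (0 <= dR * (eta * (B - a))) by (apply Rmult_le_pos; nra).
    assert (0 <= gLR * (l * c + eta * B)) by (apply Rmult_le_pos; nra).
    nra.
  - assert (0 <= dL * (eta * (l + B))) by (apply Rmult_le_pos; nra).
    assert (0 <= dR * (eta * (r + B))) by (apply Rmult_le_pos; nra).
    nra.
  - (* the delta terms cancel: C' = muL L + muR R + rho A - C (aL L + gLR L + aR R + gRL R) *)
    assert (0 <= aL * (eta * (l + B))) by (apply Rmult_le_pos; nra).
    assert (0 <= gLR * (eta * (l + B))) by (apply Rmult_le_pos; nra).
    assert (0 <= aR * (eta * (r + B))) by (apply Rmult_le_pos; nra).
    assert (0 <= gRL * (eta * (r + B))) by (apply Rmult_le_pos; nra).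
    assert (0 <= muL * (l + eta)) by (apply Rmult_le_pos; nra).
    assert (0 <= muR * (r + eta)) by (apply Rmult_le_pos; nra).
    assert (0 <= rho * (a + eta)) by (apply Rmult_le_pos; nra).
    nra.
Qed.

End Model.

Theorem proposition6p1
  (aL aR muL muR gRL gLR dL dR rho : R)
  (haL : 0 < aL) (haR : 0 < aR) (hmuL : 0 < muL) (hmuR : 0 < muR)
  (hgRL : 0 < gRL) (hgLR : 0 < gLR) (hdL : 0 < dL) (hdR : 0 < dR)
  (hrho : 0 < rho)
  (L Rf A : R -> R)
  (hL : forall t, 0 < t -> is_derive L t (fL aL gRL dL muL (L t) (Rf t) (A t)))
  (hR : forall t, 0 < t -> is_derive Rf t (fR aR gLR dR muR (L t) (Rf t) (A t)))
  (hA : forall t, 0 < t -> is_derive A t (fA dL dR rho (L t) (Rf t) (A t)))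
  (cL : filterlim L (at_right 0) (locally (L 0)))
  (cR : filterlim Rf (at_right 0) (locally (Rf 0)))
  (cA : filterlim A (at_right 0) (locally (A 0)))
  (h0 : in_T (L 0) (Rf 0) (A 0)) :
  forall t, 0 <= t -> in_T (L t) (Rf t) (A t).
Proof.
  intros t Ht.
  destruct (Req_dec t 0) as [-> | Ht0]; [exact h0 |].
  assert (Htpos : 0 < t) by lra.
  destruct (bounded_on_segment L t Htpos cL
              (fun s Hs => is_derive_continuous _ _ _ (hL s (proj1 Hs)))) as [ML HML].
  destruct (bounded_on_segment Rf t Htpos cR
              (fun s Hs => is_derive_continuous _ _ _ (hR s (proj1 Hs)))) as [MR HMR].
  destruct (bounded_on_segment A t Htpos cA
              (fun s Hs => is_derive_continuous _ _ _ (hA s (proj1 Hs)))) as [MA HMA].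
  apply in_T_coord; intros i Hi.
  apply (nonneg_invariant 4 (fun i s => coord (L s) (Rf s) (A s) i)
           (fun i s => field aL aR muL muR gRL gLR dL dR rho i (L s) (Rf s) (A s))
           (rate_sum aL aR muL muR gRL gLR dL dR rho * (1 + ML + MR + MA + 1)) t);
    [| | | | exact Hi | lra].
  - intros j s _ Hs; apply is_derive_coord; [apply hL | apply hR | apply hA]; lra.
  - intros j _; apply coord_right_cont; assumption.
  - apply in_T_coord, h0.
  - intros j s eta Hj Hs Heta Hlow Hzero.
    apply field_quasi_positive; try lra; try assumption.
    intros k _; apply coord_abs_le; [apply HML | apply HMR | apply HMA]; lra.
Qed.
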